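(* Let $X$ be a Baire topological group. Then the following conditions are equivalent: (1) $X$ is metrizable; (2) $X$ is point-cosmic; (3) $X$ is a $\sigma$-space.
   Context: Topological groups are assumed Hausdorff. A topological space is Baire if for every sequence $(U_n)_{n\in\omega}$ of open dense subsets the intersection $\bigcap_n U_n$ is dense. A family $\mathcal N$ of subsets of a topological space $X$ is a network at a point $x\in X$ if for every neighborhood $O_x$ of $x$ the union $\bigcup\{N\in\mathcal N: N\subset O_x\}$ is a neighborhood of $x$; $\mathcal N$ is a network if it is a network at each point of $X$. A regular topological space $X$ is point-cosmic if each point $x\in X$ has a countable network $\mathcal N_x$ at $x$. A regular topological space is a $\sigma$-space if it has a $\sigma$-discrete network (a network that is a countable union of discrete families). *)

From Stdlib Require Import Reals.
Open Scope R_scope.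

Section Top.
Variable X : Type.
Definition set := X -> Prop.

Definition is_topology (op : set -> Prop) : Prop :=
  op (fun _ => True) /\
  (forall U V, op U -> op V -> op (fun x => U x /\ V x)) /\
  (forall F : set -> Prop, (forall U, F U -> op U) ->
     op (fun x => exists U, F U /\ U x)).

Variable op : set -> Prop.

Definition nbhd (N : set) (x : X) : Prop :=
  exists U, op U /\ U x /\ (forall y, U y -> N y).

Definition closure (A : set) : set :=
  fun x => forall N, nbhd N x -> exists y, N y /\ A y.

Definition hausdorff : Prop :=
  forall x y, x <> y -> exists U V, op U /\ op V /\ U x /\ V y /\
    (forall z, U z -> V z -> False).

Definition regular : Prop :=
  hausdorff /\
  forall x U, op U -> U x ->
    exists V, op V /\ V x /\ (forall y, closure V y -> U y).

Definition dense (A : set) : Prop :=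
  forall U, op U -> (exists x, U x) -> exists x, U x /\ A x.

Definition baire : Prop :=
  forall Us : nat -> set, (forall n, op (Us n) /\ dense (Us n)) ->
    dense (fun x => forall n, Us n x).

Definition is_metric (d : X -> X -> R) : Prop :=
  (forall x y, 0 <= d x y) /\ (forall x y, d x y = 0 <-> x = y) /\
  (forall x y, d x y = d y x) /\ (forall x y z, d x z <= d x y + d y z).

Definition metrizable : Prop :=
  exists d, is_metric d /\
    forall U, op U <-> (forall x, U x -> exists eps, 0 < eps /\
                                   forall y, d x y < eps -> U y).

Definition network_at (F : set -> Prop) (x : X) : Prop :=
  forall O, nbhd O x ->
    nbhd (fun y => exists N, F N /\ (forall z, N z -> O z) /\ N y) x.

Definition network (F : set -> Prop) : Prop := forall x, network_at F x.

Definition countable_family (F : set -> Prop) : Prop :=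
  exists f : nat -> set, forall N, F N -> exists n, f n = N.

Definition point_cosmic : Prop :=
  regular /\ forall x, exists F, countable_family F /\ network_at F x.

Definition discrete_family (F : set -> Prop) : Prop :=
  forall x, exists O, nbhd O x /\
    forall A B, F A -> F B -> (exists y, O y /\ A y) -> (exists y, O y /\ B y) ->
      forall z, A z <-> B z.

Definition sigma_space : Prop :=
  regular /\ exists D : nat -> (set -> Prop),
    (forall n, discrete_family (D n)) /\
    network (fun N => exists n, D n N).

End Top.

Definition topological_group (X : Type) (op : set X -> Prop)
  (mul : X -> X -> X) (inv : X -> X) (e : X) : Prop :=
  is_topology X op /\
  (forall x y z, mul (mul x y) z = mul x (mul y z)) /\
  (forall x, mul e x = x) /\ (forall x, mul x e = x) /\
  (forall x, mul (inv x) x = e) /\ (forall x, mul x (inv x) = e) /\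
  (forall x y W, nbhd X op W (mul x y) ->
     exists U V, nbhd X op U x /\ nbhd X op V y /\
       forall u v, U u -> V v -> W (mul u v)) /\
  (forall x W, nbhd X op W (inv x) ->
     exists U, nbhd X op U x /\ forall u, U u -> W (inv u)) /\
  hausdorff X op.

(* (1) => (2), (3).  In a metric space the balls of dyadic radius about x
   form a countable network at x.  For a sigma-discrete network we imitate
   Stone's argument: a choice tower well-orders the space, and for radii
   r = pw m and margins pw k the "cells" (points whose first r-near point is
   a given x, at distance < r - pw k from it) form a discrete family.

   (2), (3) => (1).  Using the Baire property we find a point x which, for a
   sequence of sets, is either outside the closure of each or inside the
   interior of its closure.  Applied to a countable network at e, or to the
   unions of the families of a sigma-discrete network, this yields a
   countable local pi-base at some point.  In a regular topological group a
   countable local pi-base turns, by taking quotients a^-1 b, into a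
   countable local base at e, and the Birkhoff-Kakutani chain metric then
   metrizes the group. *)

From Stdlib Require Import Reals Lra Lia List Classical ClassicalEpsilon
  FunctionalExtensionality PropExtensionality Cantor.
Open Scope R_scope.

Section Topology.
Variable X : Type.
Variable op : set X -> Prop.
Hypothesis Htop : is_topology X op.

Definition sub (A B : set X) : Prop := forall x, A x -> B x.

Lemma set_ext (A B : set X) : (forall x, A x <-> B x) -> A = B.
Proof.
  intro H; apply functional_extensionality; intro x.
  apply propositional_extensionality; apply H.
Qed.

Lemma op_ext (A B : set X) : op A -> (forall x, A x <-> B x) -> op B.
Proof. intros HA H; rewrite <- (set_ext A B H); exact HA. Qed.

Lemma op_full : op (fun _ => True).
Proof. apply Htop. Qed.

Lemma op_inter A B : op A -> op B -> op (fun x => A x /\ B x).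
Proof. apply Htop. Qed.

Lemma op_union (F : set X -> Prop) : (forall U, F U -> op U) ->
  op (fun x => exists U, F U /\ U x).
Proof. apply Htop. Qed.

Lemma op_or A B : op A -> op B -> op (fun x => A x \/ B x).
Proof.
  intros HA HB.
  apply op_ext with (fun x => exists U, (U = A \/ U = B) /\ U x).
  - apply op_union. intros U [-> | ->]; auto.
  - intro x; split.
    + intros [U [[-> | ->] H]]; auto.
    + intros [H | H]; eauto.
Qed.

Lemma op_of_nbhd (A : set X) : (forall x, A x -> nbhd X op A x) -> op A.
Proof.
  intro H.
  apply op_ext with (fun x => exists U, (op U /\ sub U A) /\ U x).
  - apply op_union. intros U [HU _]; exact HU.
  - intro x; split.
    + intros [U [[_ HU] Ux]]; auto.
    + intro Ax. destruct (H x Ax) as [U [HU [Ux HUA]]]. exists U; auto.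
Qed.

Lemma nbhd_open (U : set X) x : op U -> U x -> nbhd X op U x.
Proof. intros; exists U; auto. Qed.

Lemma nbhd_mono (A B : set X) x : nbhd X op A x -> sub A B -> nbhd X op B x.
Proof. intros [U [HU [Ux H]]] HAB; exists U; split; auto. Qed.

Lemma nbhd_inter (A B : set X) x : nbhd X op A x -> nbhd X op B x ->
  nbhd X op (fun y => A y /\ B y) x.
Proof.
  intros [U [HU [Ux H]]] [V [HV [Vx H']]].
  exists (fun y => U y /\ V y); split; [apply op_inter; auto|]; split; auto.
  intros y [? ?]; auto.
Qed.

Lemma nbhd_pt (A : set X) x : nbhd X op A x -> A x.
Proof. intros [U [_ [Ux H]]]; auto. Qed.

Definition interior (A : set X) : set X :=
  fun x => exists U, op U /\ U x /\ sub U A.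

Lemma op_interior A : op (interior A).
Proof.
  apply op_of_nbhd. intros x [U [HU [Ux HUA]]].
  exists U; split; auto; split; auto. intros y Uy; exists U; auto.
Qed.

Lemma interior_sub A : sub (interior A) A.
Proof. intros x [U [_ [Ux H]]]; auto. Qed.

Lemma closure_incl (A : set X) : sub A (closure X op A).
Proof. intros x Ax N HN; exists x; split; auto. apply nbhd_pt; auto. Qed.

Lemma closure_mono (A B : set X) : sub A B -> sub (closure X op A) (closure X op B).
Proof. intros HAB x Hx N HN. destruct (Hx N HN) as [y [Ny Ay]]; eauto. Qed.

Lemma op_compl_closure A : op (fun x => ~ closure X op A x).
Proof.
  apply op_of_nbhd. intros x Hx.
  apply not_all_ex_not in Hx. destruct Hx as [N HN].
  apply imply_to_and in HN. destruct HN as [[U [HU [Ux HUN]]] Hno].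
  exists U; split; auto; split; auto.
  intros y Uy Hy. apply Hno.
  destruct (Hy U (nbhd_open U y HU Uy)) as [z [Uz Az]]. eauto.
Qed.

Lemma interior_closure_or_outside_dense (A : set X) :
  dense X op (fun x => interior (closure X op A) x \/ ~ closure X op A x).
Proof.
  intros U HU [x0 Ux0].
  destruct (classic (exists x, U x /\ ~ closure X op A x)) as [[x [Ux Hx]] | Hno].
  - exists x; auto.
  - exists x0; split; auto. left. exists U; split; auto; split; auto.
    intros y Uy. apply NNPP; intro Hy; apply Hno; eauto.
Qed.

Section Baire.
Hypothesis HB : baire X op.

Lemma baire_generic_point (A : nat -> set X) (W : set X) :
  op W -> (exists x, W x) ->
  exists x, W x /\
    forall n, interior (closure X op (A n)) x \/ ~ closure X op (A n) x.
Proof.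
  intros HW Hne.
  apply (HB (fun n x => interior (closure X op (A n)) x \/ ~ closure X op (A n) x)).
  - intro n; split.
    + apply op_or; [apply op_interior | apply op_compl_closure].
    + apply interior_closure_or_outside_dense.
  - exact HW.
  - exact Hne.
Qed.

End Baire.
End Topology.

Section PiBase.
Variable X : Type.
Variable op : set X -> Prop.
Hypothesis Htop : is_topology X op.
Hypothesis HB : baire X op.

Definition local_pi_base (H : nat -> set X) (x : X) : Prop :=
  (forall i, op (H i)) /\
  forall V, nbhd X op V x ->
    exists i, (exists a, H i a) /\ sub X (H i) (closure X op V).

(* In a Baire space, a countable network at x yields a countable local
   pi-base at x: the interiors of the closures of its members. *)
Lemma countable_network_pi_base (F : set X -> Prop) (x : X) :
  countable_family X F -> network_at X op F x ->
  exists H, local_pi_base H x.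
Proof.
  intros [f Hf] Hnet.
  exists (fun i => interior X op (closure X op (f i))).
  split; [intro; apply op_interior; auto|].
  intros V HV.
  destruct (Hnet V HV) as [P [HP [Px HPnet]]].
  destruct (baire_generic_point X op Htop HB f P HP (ex_intro _ x Px))
    as [p [Pp Hp]].
  destruct (HPnet p Pp) as [N [FN [HNV Np]]].
  destruct (Hf N FN) as [i <-].
  exists i. split.
  - exists p. destruct (Hp i) as [Hi | Hout]; auto.
    exfalso; apply Hout, closure_incl; auto.
  - intros z Hz. apply (closure_mono X op (f i)); auto.
    apply interior_sub in Hz; auto.
Qed.

Definition meets (A B : set X) : Prop := exists y, A y /\ B y.

Definition meets_at_most_one (O : set X) (D : set X -> Prop) : Prop :=
  forall A B, D A -> D B -> meets O A -> meets O B -> forall z, A z <-> B z.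

Definition union (D : set X -> Prop) : set X := fun y => exists M, D M /\ M y.

Lemma interior_closure_member (D : set X -> Prop) (O N : set X) (x : X) :
  nbhd X op O x -> meets_at_most_one O D -> D N -> N x ->
  interior X op (closure X op (union D)) x ->
  interior X op (closure X op N) x.
Proof.
  intros HO Hone DN Nx [P [HP [Px HPcl]]].
  destruct HO as [O' [HO' [O'x HO'O]]].
  exists (fun y => P y /\ O' y). split; [apply op_inter; auto|]. split; [auto|].
  intros y [Py O'y] R HR.
  assert (HRPO : nbhd X op (fun z => R z /\ (P z /\ O' z)) y).
  { apply nbhd_inter; auto. apply nbhd_open; auto. apply op_inter; auto. }
  destruct (HPcl y Py _ HRPO) as [w [[Rw [Pw O'w]] [M [DM Mw]]]].
  exists w; split; auto.
  apply (Hone M N DM DN); auto.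
  - exists w; auto.
  - exists x; auto.
Qed.

(* In a Baire space, a sigma-discrete network yields a countable local
   pi-base at some point x: x is chosen generic for the unions of the
   discrete families, and H n collects the interiors of closures of the
   (essentially unique) member of the n-th family near x. *)
Lemma sigma_discrete_network_pi_base (D : nat -> (set X -> Prop)) (x0 : X) :
  (forall n, discrete_family X op (D n)) ->
  network X op (fun N => exists n, D n N) ->
  exists x H, local_pi_base H x.
Proof.
  intros Hdisc Hnet.
  destruct (baire_generic_point X op Htop HB (fun n => union (D n)) _
              (op_full X op Htop) (ex_intro _ x0 I)) as [x [_ Hx]].
  destruct (choice (fun n O => nbhd X op O x /\ meets_at_most_one O (D n)))
    as [O HO]; [intro n; exact (Hdisc n x)|].
  exists x, (fun n y => exists U,
    (exists M, D n M /\ meets (O n) M /\ U = interior X op (closure X op M)) /\ U y).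
  split.
  - intro n. apply op_union; auto.
    intros U [M [_ [_ ->]]]. apply op_interior; auto.
  - intros V HV.
    destruct (nbhd_pt X op _ _ (Hnet x V HV)) as [N [[n DN] [HNV Nx]]].
    destruct (HO n) as [HOn Hone].
    assert (HNO : meets (O n) N) by (exists x; split; auto; apply nbhd_pt with op; auto).
    exists n. split.
    + exists x, (interior X op (closure X op N)). split; [exists N; auto|].
      apply interior_closure_member with (D n) (O n); auto.
      destruct (Hx n) as [Hi | Hout]; auto.
      exfalso; apply Hout, closure_incl; exists N; auto.
    + intros y [U [[M [DM [HMO ->]]] Hy]].
      apply (closure_mono X op M V); [|apply interior_sub in Hy; auto].
      intros z Mz. apply HNV, (Hone M N DM DN HMO HNO); auto.
Qed.

End PiBase.

Definition pw (n : nat) : R := / 2 ^ n.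

Lemma pw_pos n : 0 < pw n.
Proof. unfold pw. apply Rinv_0_lt_compat, pow_lt; lra. Qed.

Lemma pw_S n : pw (S n) = pw n / 2.
Proof.
  unfold pw. simpl. assert (2 ^ n <> 0) by (apply pow_nonzero; lra).
  field; auto.
Qed.

Lemma pw_lt m n : (m < n)%nat -> pw n < pw m.
Proof.
  intro H. unfold pw. apply Rinv_lt_contravar.
  - apply Rmult_lt_0_compat; apply pow_lt; lra.
  - apply Rlt_pow; auto; lra.
Qed.

Lemma pw_le_inv m n : pw m <= pw n -> (n <= m)%nat.
Proof.
  intro H. destruct (Compare_dec.le_lt_dec n m) as [|Hlt]; auto.
  apply pw_lt in Hlt. lra.
Qed.

Lemma INR_le_pow2 n : INR n <= 2 ^ n.
Proof.
  induction n; [simpl; lra|].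
  rewrite S_INR. simpl. assert (1 <= 2 ^ n) by (apply pow_R1_Rle; lra). lra.
Qed.

Lemma pw_small eps : 0 < eps -> exists n, pw n < eps.
Proof.
  intro He. destruct (archimed_cor1 eps He) as [N [HN HN0]].
  exists N. eapply Rle_lt_trans; [|exact HN]. unfold pw.
  apply Rinv_le_contravar; [apply lt_0_INR; auto | apply INR_le_pow2].
Qed.

Section Group.
Variable X : Type.
Variable op : set X -> Prop.
Variable mul : X -> X -> X.
Variable inv : X -> X.
Variable e : X.
Hypothesis HG : topological_group X op mul inv e.

Lemma G_top : is_topology X op. Proof. apply HG. Qed.
Lemma G_assoc x y z : mul (mul x y) z = mul x (mul y z). Proof. apply HG. Qed.
Lemma G_el x : mul e x = x. Proof. apply HG. Qed.
Lemma G_er x : mul x e = x. Proof. apply HG. Qed.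
Lemma G_il x : mul (inv x) x = e. Proof. apply HG. Qed.
Lemma G_ir x : mul x (inv x) = e. Proof. apply HG. Qed.
Lemma G_mulc x y W : nbhd X op W (mul x y) ->
  exists U V, nbhd X op U x /\ nbhd X op V y /\ forall u v, U u -> V v -> W (mul u v).
Proof. apply HG. Qed.
Lemma G_invc x W : nbhd X op W (inv x) ->
  exists U, nbhd X op U x /\ forall u, U u -> W (inv u).
Proof. apply HG. Qed.
Lemma G_haus : hausdorff X op. Proof. apply HG. Qed.

Lemma G_canc a z : mul (inv a) (mul a z) = z.
Proof. rewrite <- G_assoc, G_il, G_el; auto. Qed.

Lemma G_canc' a z : mul a (mul (inv a) z) = z.
Proof. rewrite <- G_assoc, G_ir, G_el; auto. Qed.

Lemma G_inv_unique a b : mul a b = e -> b = inv a.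
Proof. intro H. rewrite <- (G_canc a b), H, G_er; auto. Qed.

Lemma G_invinv a : inv (inv a) = a.
Proof. symmetry; apply G_inv_unique; apply G_il. Qed.

Lemma G_inve : inv e = e.
Proof. symmetry; apply G_inv_unique; apply G_el. Qed.

Lemma G_invmul a b : inv (mul a b) = mul (inv b) (inv a).
Proof.
  symmetry; apply G_inv_unique.
  rewrite G_assoc, <- (G_assoc b), G_ir, G_el, G_ir; auto.
Qed.

Lemma G_div_shift b a c : mul (inv (mul b a)) (mul b c) = mul (inv a) c.
Proof. rewrite G_invmul, G_assoc, G_canc; auto. Qed.

Lemma G_div_chain x w z y :
  mul (mul (inv x) w) (mul (mul (inv w) z) (mul (inv z) y)) = mul (inv x) y.
Proof. rewrite !G_assoc, !G_canc'; auto. Qed.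

Lemma G_div_eq x y : mul (inv x) y = e -> x = y.
Proof. intro H. rewrite <- (G_invinv x). symmetry; apply G_inv_unique; auto. Qed.

Lemma nbhd_transl V a z : nbhd X op V (mul a z) -> nbhd X op (fun w => V (mul a w)) z.
Proof.
  intro H. destruct (G_mulc _ _ _ H) as [P [Q [HP [HQ HPQ]]]].
  apply nbhd_mono with Q; auto. intros w Qw. apply HPQ; auto.
  apply nbhd_pt with op; auto.
Qed.

Lemma op_transl G a : op G -> op (fun z => G (mul a z)).
Proof.
  intro HGo. apply op_of_nbhd; [apply G_top|]. intros z Hz.
  apply nbhd_transl. apply nbhd_open; auto.
Qed.

Lemma op_inv_pre G : op G -> op (fun z => G (inv z)).
Proof.
  intro HGo. apply op_of_nbhd; [apply G_top|]. intros z Hz.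
  destruct (G_invc z G (nbhd_open X op G _ HGo Hz)) as [U [HU HUG]].
  apply nbhd_mono with U; auto.
Qed.

Lemma open_in_nbhd (A : set X) x : nbhd X op A x ->
  exists U, op U /\ U x /\ sub X U A.
Proof. intros [U H]; exists U; exact H. Qed.

Lemma div_nbhd O : nbhd X op O e -> exists W, op W /\ W e /\
  forall a b, W a -> W b -> O (mul (inv a) b).
Proof.
  intro HO.
  assert (H1 : nbhd X op O (mul (inv e) e)) by (rewrite G_inve, G_el; auto).
  destruct (G_mulc _ _ _ H1) as [P [Q [HP [HQ HPQ]]]].
  destruct (G_invc e P HP) as [R [HR HRP]].
  destruct (open_in_nbhd _ _ (nbhd_inter X op G_top _ _ _ HR HQ)) as [W [HW [We HWs]]].
  exists W; split; auto; split; auto.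
  intros a b Wa Wb. apply HPQ; [apply HRP|]; apply HWs; auto.
Qed.

Definition cube_root (W V : set X) : Prop :=
  op V /\ V e /\ (forall a, V a -> V (inv a)) /\
  forall a b c, V a -> V b -> V c -> W (mul a (mul b c)).

Lemma cube_root_exists O : nbhd X op O e -> exists V, cube_root O V.
Proof.
  intro HO.
  assert (H1 : nbhd X op O (mul e (mul e e))) by (rewrite !G_el; auto).
  destruct (G_mulc _ _ _ H1) as [P [Q [HP [HQ HPQ]]]].
  destruct (G_mulc _ _ _ HQ) as [P' [Q' [HP' [HQ' HPQ']]]].
  assert (HN : nbhd X op (fun y => P y /\ (P' y /\ Q' y)) e).
  { apply nbhd_inter; auto using G_top. apply nbhd_inter; auto using G_top. }
  destruct (open_in_nbhd _ _ HN) as [W [HW [We HWs]]].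
  exists (fun a => W a /\ W (inv a)).
  split; [apply op_inter; auto using G_top; apply op_inv_pre; auto|].
  split; [split; auto; rewrite G_inve; auto|].
  split; [intros a [Ha Hb]; rewrite G_invinv; auto|].
  intros a b c [Wa _] [Wb _] [Wc _].
  apply HPQ; [apply HWs; auto|]. apply HPQ'; apply HWs; auto.
Qed.

Definition first_countable_at (x : X) : Prop :=
  exists B : nat -> set X, (forall k, op (B k) /\ B k x) /\
    forall O, nbhd X op O x -> exists k, sub X (B k) O.

(* A regular topological group with a countable local pi-base at some point
   is first countable: the sets of quotients a^-1 b with a, b in H i form a
   countable local base at e. *)
Lemma first_countable_of_pi_base (H : nat -> set X) (x : X) :
  regular X op -> local_pi_base X op H x -> first_countable_at e.
Proof.
  intros [_ Hreg] [Hop Hpi].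
  exists (fun i z => (exists a, H i a /\ H i (mul a z)) \/ ~ (exists a, H i a)).
  split.
  - intro k. destruct (classic (exists a, H k a)) as [Hne | Hem].
    + split.
      * apply op_ext with (fun z => exists U,
          (exists a, H k a /\ U = (fun z => H k (mul a z))) /\ U z).
        { apply op_union; [apply G_top|]. intros U [a [_ ->]]. apply op_transl; auto. }
        intro z; split.
        { intros [U [[a [Ha ->]] Hz]]. left; eauto. }
        { intros [[a [Ha Hz]] | Hn]; [|contradiction].
          exists (fun z => H k (mul a z)); eauto. }
      * left. destruct Hne as [a Ha]. exists a; rewrite G_er; auto.
    + split; [| right; auto].
      apply op_ext with (fun _ => True); [apply op_full, G_top|]. intuition.
  - intros O HO.
    destruct (div_nbhd O HO) as [W [HW [We HWO]]].
    assert (HWx : op (fun y => W (mul (inv x) y)) /\ W (mul (inv x) x))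
      by (split; [apply op_transl; auto | rewrite G_il; auto]).
    destruct (Hreg x _ (proj1 HWx) (proj2 HWx)) as [V [HV [Vx HVW]]].
    destruct (Hpi V (nbhd_open X op V x HV Vx)) as [i [Hne Hsub]].
    exists i. intros z [[a [Ha Haz]] | Hn]; [|contradiction].
    rewrite <- (G_canc a z), <- (G_div_shift (inv x) a (mul a z)).
    apply HWO; apply HVW, Hsub; auto.
Qed.

Definition kakutani_sequence (U : nat -> set X) : Prop :=
  (forall x, U 0%nat x) /\ (forall n, op (U n) /\ U n e) /\
  (forall n a, U n a -> U n (inv a)) /\
  (forall n a b c, U (S n) a -> U (S n) b -> U (S n) c -> U n (mul a (mul b c))) /\
  (forall O, nbhd X op O e -> exists n, sub X (U n) O).

(* Shrink a countable base B at e by iterated cube roots: U (n+1) is a cube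
   root of U n intersected with B n. *)
Lemma kakutani_sequence_exists : first_countable_at e -> exists U, kakutani_sequence U.
Proof.
  intros [B [HB1 HB2]].
  assert (Hroot : forall p : nat * set X, exists V,
    op (snd p) -> snd p e -> cube_root (fun z => snd p z /\ B (fst p) z) V).
  { intros [n W]. simpl.
    destruct (classic (op W /\ W e)) as [[HW We] | Hno].
    - destruct (cube_root_exists (fun z => W z /\ B n z)) as [V HV]; [|eauto].
      apply nbhd_open; [apply op_inter; [apply G_top | auto | apply HB1] | split; auto; apply HB1].
    - exists W; tauto. }
  destruct (choice _ Hroot) as [root Hr].
  set (U := fix U n := match n with
                       | 0%nat => fun _ => True
                       | S n => root (n, U n) end).
  assert (HUo : forall n, op (U n) /\ U n e).
  { induction n as [|n [Ho Hn]]; simpl.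
    - split; auto. apply op_full, G_top.
    - destruct (Hr (n, U n) Ho Hn) as [? [? _]]; auto. }
  assert (HUr : forall n, cube_root (fun z => U n z /\ B n z) (U (S n)))
    by (intro n; exact (Hr (n, U n) (proj1 (HUo n)) (proj2 (HUo n)))).
  exists U. split; [simpl; auto|]. split; [auto|]. split; [|split].
  - intros [|n] a Ha; [simpl; auto|]. apply (HUr n); auto.
  - intros n a b c Ha Hb Hc. apply (HUr n); auto.
  - intros O HO. destruct (HB2 O HO) as [k Hk]. exists (S k).
    intros a Ha. apply Hk.
    destruct (HUr k) as [_ [Hse [_ Hcube]]].
    pose proof (Hcube a e e Ha Hse Hse) as H.
    rewrite G_el, G_er in H. tauto.
Qed.

Section Kakutani.
Variable U : nat -> set X.
Hypothesis HU : kakutani_sequence U.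

Lemma U_full x : U 0%nat x. Proof. apply HU. Qed.
Lemma U_open n : op (U n) /\ U n e. Proof. apply HU. Qed.
Lemma U_sym n a : U n a -> U n (inv a). Proof. apply HU. Qed.
Lemma U_cube n a b c : U (S n) a -> U (S n) b -> U (S n) c -> U n (mul a (mul b c)).
Proof. apply HU. Qed.
Lemma U_base O : nbhd X op O e -> exists n, sub X (U n) O. Proof. apply HU. Qed.

Lemma U_decr n m : (n <= m)%nat -> sub X (U m) (U n).
Proof.
  induction 1; intros a Ha; auto.
  apply IHle. pose proof (U_cube m a e e Ha (proj2 (U_open _)) (proj2 (U_open _))) as Hq.
  rewrite G_el, G_er in Hq; auto.
Qed.

Lemma U_separated a : (forall n, U n a) -> a = e.
Proof.
  intro Hall. apply NNPP; intro Hne.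
  destruct (G_haus e a (not_eq_sym Hne)) as [P [Q [HP [HQ [Pe [Qa Hdis]]]]]].
  destruct (U_base P (nbhd_open X op P e HP Pe)) as [n Hn].
  apply (Hdis a); auto.
Qed.

Fixpoint chain (x y : X) (l : list (X * nat)) : Prop :=
  match l with
  | nil => x = y
  | (z, n) :: l' => U n (mul (inv x) z) /\ chain z y l'
  end.

Fixpoint cost (l : list (X * nat)) : R :=
  match l with
  | nil => 0
  | (_, n) :: l' => pw n + cost l'
  end.

Lemma cost_nonneg l : 0 <= cost l.
Proof. induction l as [|[z n] l IH]; simpl; [lra|]. pose proof (pw_pos n); lra. Qed.

Lemma cost_app l1 l2 : cost (l1 ++ l2) = cost l1 + cost l2.
Proof. induction l1 as [|[z n] l IH]; simpl; [lra|]. rewrite IH; lra. Qed.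

Lemma chain_app x y l1 l2 : chain x y (l1 ++ l2) <-> exists w, chain x w l1 /\ chain w y l2.
Proof.
  revert x; induction l1 as [|[z n] l IH]; intro x; simpl.
  - split; [intro H; exists x; auto | intros [w [-> H]]; auto].
  - split.
    + intros [H1 H2]. apply IH in H2. destruct H2 as [w [? ?]]. exists w; auto.
    + intros [w [[H1 H2] H3]]. split; auto. apply IH; eauto.
Qed.

Lemma split_middle l A H : l <> nil -> 0 <= A -> A <= H -> A + cost l <= 2 * H ->
  exists l1 p l2, l = l1 ++ p :: l2 /\ A + cost l1 <= H /\ cost l2 <= H.
Proof.
  revert A; induction l as [|[z m] l IH]; intros A Hne HA HAH Htot; [contradiction|].
  simpl in Htot. pose proof (pw_pos m).
  destruct (Rlt_le_dec H (A + pw m)) as [Hlt | Hle].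
  - exists nil, (z, m), l. simpl. split; auto. split; lra.
  - destruct l as [|q l'].
    + exists nil, (z, m), nil. simpl. split; auto. split; lra.
    + destruct (IH (A + pw m)) as [l1 [p [l2 [Heq [H1 H2]]]]]; try lra.
      { discriminate. }
      exists ((z, m) :: l1), p, l2. rewrite Heq. simpl. split; auto. split; lra.
Qed.

(* The key estimate: a chain of cost at most pw (n+1) from x to y gives
   x^-1 y in U n.  Induction on the length, splitting at the middle step. *)
Lemma chain_small_cost k : forall l, (length l <= k)%nat -> forall n x y,
  chain x y l -> cost l <= pw (S n) -> U n (mul (inv x) y).
Proof.
  induction k as [|k IH]; intros l Hlen n x y Hc Hcost.
  - destruct l; [|simpl in Hlen; lia]. simpl in Hc; subst.
    rewrite G_il. apply U_open.
  - destruct l as [|p0 l0] eqn:Hl.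
    + simpl in Hc; subst. rewrite G_il. apply U_open.
    + rewrite <- Hl in *.
      destruct (split_middle l 0 (cost l / 2)) as [l1 [[z m] [l2 [Heq [H1 H2]]]]].
      { rewrite Hl; discriminate. } { lra. } { pose proof (cost_nonneg l); lra. } { lra. }
      rewrite Heq in Hc, Hcost, Hlen.
      apply chain_app in Hc. destruct Hc as [w [Hc1 [Hwz Hc2]]].
      rewrite cost_app in Hcost. simpl in Hcost.
      rewrite Heq, cost_app in H1, H2. simpl in H1, H2.
      rewrite length_app in Hlen; simpl in Hlen.
      pose proof (cost_nonneg l1). pose proof (cost_nonneg l2). pose proof (pw_pos m).
      pose proof (pw_S (S n)).
      rewrite <- (G_div_chain x w z y).
      apply U_cube.
      * apply (IH l1); auto; [lia|]. lra.
      * apply (U_decr (S n) m); auto. apply pw_le_inv. lra.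
      * apply (IH l2); auto; [lia|]. lra.
Qed.

(* Chain costs from x to y, negated so that the chain pseudo-distance is
   minus their least upper bound. *)
Definition neg_costs (x y : X) (t : R) : Prop := exists l, chain x y l /\ cost l = - t.

Lemma neg_costs_bound x y : bound (neg_costs x y).
Proof. exists 0. intros t [l [_ Hl]]. pose proof (cost_nonneg l); lra. Qed.

Lemma neg_costs_inhabited x y : exists t, neg_costs x y t.
Proof. exists (- pw 0). exists ((y, 0%nat) :: nil). simpl; split; [auto using U_full | lra]. Qed.

Definition d0 (x y : X) : R :=
  - proj1_sig (completeness _ (neg_costs_bound x y) (neg_costs_inhabited x y)).

Lemma d0_lub x y : is_lub (neg_costs x y) (- d0 x y).
Proof. unfold d0. rewrite Ropp_involutive. apply proj2_sig. Qed.

Lemma d0_lb x y l : chain x y l -> d0 x y <= cost l.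
Proof.
  intro H. assert (- cost l <= - d0 x y); [|lra].
  apply (proj1 (d0_lub x y)). exists l; split; auto; lra.
Qed.

Lemma d0_approx x y eps : 0 < eps -> exists l, chain x y l /\ cost l < d0 x y + eps.
Proof.
  intro He. apply NNPP; intro Hn.
  assert (- d0 x y <= - (d0 x y + eps)); [|lra].
  apply (proj2 (d0_lub x y)). intros t [l [Hc Hl]].
  apply Rnot_lt_le. intro Hlt. apply Hn. exists l; split; auto; lra.
Qed.

Lemma d0_nonneg x y : 0 <= d0 x y.
Proof.
  assert (- d0 x y <= 0); [|lra].
  apply (proj2 (d0_lub x y)). intros t [l [_ Hl]]. pose proof (cost_nonneg l); lra.
Qed.

Lemma d0_refl x : d0 x x = 0.
Proof. pose proof (d0_nonneg x x). pose proof (d0_lb x x nil eq_refl). simpl in *. lra. Qed.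

Lemma d0_tri x y z : d0 x z <= d0 x y + d0 y z.
Proof.
  apply Rnot_lt_le; intro H.
  set (eps := (d0 x z - d0 x y - d0 y z) / 2).
  assert (He : 0 < eps) by (unfold eps; lra).
  destruct (d0_approx x y eps He) as [l1 [H1 C1]].
  destruct (d0_approx y z eps He) as [l2 [H2 C2]].
  assert (Hc : chain x z (l1 ++ l2)) by (apply chain_app; eauto).
  apply d0_lb in Hc. rewrite cost_app in Hc. unfold eps in *. lra.
Qed.

Lemma d0_small n x y : d0 x y < pw (S n) -> U n (mul (inv x) y).
Proof.
  intro H. destruct (d0_approx x y (pw (S n) - d0 x y)) as [l [Hc Hcost]]; [lra|].
  apply (chain_small_cost (length l) l (le_n _) n x y Hc). lra.
Qed.

Lemma d0_step n x y : U n (mul (inv x) y) -> d0 x y <= pw n.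
Proof.
  intro H. pose proof (d0_lb x y ((y, n) :: nil)) as Hl. simpl in Hl.
  assert (d0 x y <= pw n + 0) by (apply Hl; split; auto). lra.
Qed.

Definition kakutani_metric (x y : X) : R := d0 x y + d0 y x.

Lemma kakutani_metric_small n x y :
  kakutani_metric x y < pw (S n) -> U n (mul (inv x) y).
Proof. unfold kakutani_metric. intro H. pose proof (d0_nonneg y x). apply d0_small; lra. Qed.

Lemma kakutani_metric_step n x y :
  U n (mul (inv x) y) -> kakutani_metric x y <= 2 * pw n.
Proof.
  intro Hy. unfold kakutani_metric. pose proof (d0_step n x y Hy).
  assert (Hy' : U n (mul (inv y) x)).
  { apply U_sym in Hy. rewrite G_invmul, G_invinv in Hy; auto. }
  pose proof (d0_step n y x Hy'). lra.
Qed.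

Lemma kakutani_metric_is_metric : is_metric X kakutani_metric.
Proof.
  unfold kakutani_metric.
  split; [intros x y; pose proof (d0_nonneg x y); pose proof (d0_nonneg y x); lra|].
  split; [|split; [intros; lra|]].
  - intros x y; split.
    + intro H0. pose proof (d0_nonneg x y); pose proof (d0_nonneg y x).
      apply G_div_eq, U_separated. intro n. apply d0_small.
      replace (d0 x y) with 0 by lra. apply pw_pos.
    + intros ->. rewrite d0_refl; lra.
  - intros x y z. pose proof (d0_tri x y z). pose proof (d0_tri z y x). lra.
Qed.

(* The metric generates the topology: its balls at x are squeezed between
   translates x U n. *)
Lemma kakutani_metric_topology : forall V, op V <->
  (forall x, V x -> exists eps, 0 < eps /\ forall y, kakutani_metric x y < eps -> V y).
Proof.
  intro V; split.
  - intros HV x Vx.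
    assert (Hn : nbhd X op (fun w => V (mul x w)) e).
    { apply nbhd_transl. rewrite G_er. apply nbhd_open; auto. }
    destruct (U_base _ Hn) as [n Hsub].
    exists (pw (S n)). split; [apply pw_pos|].
    intros y Hy. apply kakutani_metric_small, Hsub in Hy. rewrite G_canc' in Hy; auto.
  - intro H. apply op_of_nbhd; [apply G_top|]. intros x Vx.
    destruct (H x Vx) as [eps [He Hb]].
    destruct (pw_small (eps / 2)) as [n Hn]; [lra|].
    exists (fun y => U n (mul (inv x) y)). split; [apply op_transl, U_open|].
    split; [rewrite G_il; apply U_open|].
    intros y Hy. apply Hb. pose proof (kakutani_metric_step n x y Hy). lra.
Qed.

End Kakutani.

Lemma first_countable_metrizable : first_countable_at e -> metrizable X op.
Proof.
  intro Hfc. destruct (kakutani_sequence_exists Hfc) as [U HU].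
  exists (kakutani_metric U HU). split.
  - apply kakutani_metric_is_metric; auto.
  - apply kakutani_metric_topology; auto.
Qed.

End Group.

(* Given a choice function c, the tower is the least family of sets closed
   under A |-> A + {c A} and under arbitrary unions.  Its members are
   linearly ordered by inclusion (Zermelo / Bourbaki-Witt); this replaces a
   well-ordering of the space in the construction of sigma-discrete networks. *)
Section Tower.
Variable X : Type.
Variable c : set X -> X.

Definition succ_set (A : set X) : set X := fun x => A x \/ x = c A.

Inductive tower : set X -> Prop :=
| tower_succ : forall A, tower A -> tower (succ_set A)
| tower_union : forall F : set X -> Prop, (forall A, F A -> tower A) ->
    tower (fun x => exists A, F A /\ A x).

Definition extreme (A : set X) : Prop :=
  forall B, tower B -> sub X B A -> ~ sub X A B -> sub X (succ_set B) A.

Lemma extreme_compare A : extreme A -> forall B, tower B ->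
  sub X B A \/ sub X (succ_set A) B.
Proof.
  intros Hext B HB. induction HB as [B HB IH | F HF IH].
  - destruct IH as [Hs | Hs].
    + destruct (classic (sub X A B)) as [Hab | Hab].
      * right. assert (A = B) by (apply set_ext; split; auto). subst; intros x; auto.
      * left. apply Hext; auto.
    + right. intros x Hx. left; auto.
  - destruct (classic (exists A', F A' /\ sub X (succ_set A) A')) as [[A' [HA' Hs]] | Hno].
    + right. intros x Hx. exists A'; split; auto.
    + left. intros x [A' [HA' Hx]].
      destruct (IH A' HA') as [Hs | Hs]; auto.
      exfalso; apply Hno; eauto.
Qed.

Lemma tower_extreme A : tower A -> extreme A.
Proof.
  induction 1 as [A HA IH | F HF IH].
  - intros B HB Hs Hns.
    destruct (extreme_compare A IH B HB) as [H1 | H1]; [|contradiction].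
    destruct (classic (sub X A B)) as [Hab | Hab].
    + assert (A = B) by (apply set_ext; split; auto). subst. intros x; auto.
    + intros x Hx. left. apply (IH B HB H1 Hab x Hx).
  - intros B HB Hs Hns.
    apply not_all_ex_not in Hns. destruct Hns as [y Hy].
    apply imply_to_and in Hy. destruct Hy as [[A' [HA' Ay]] Hby].
    destruct (extreme_compare A' (IH A' HA') B HB) as [H1 | H1].
    + assert (Hn : ~ sub X A' B) by (intro Hc; apply Hby; auto).
      intros x Hx. exists A'; split; auto. apply (IH A' HA' B HB H1 Hn x Hx).
    + exfalso; apply Hby. apply H1. left; auto.
Qed.

Lemma tower_compare A B : tower A -> tower B -> sub X B A \/ sub X (succ_set A) B.
Proof. intros HA HB. apply extreme_compare; auto. apply tower_extreme; auto. Qed.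

End Tower.

Section Metric.
Variable X : Type.
Variable op : set X -> Prop.
Variable d : X -> X -> R.
Hypothesis Hd : is_metric X d.
Hypothesis Hdt : forall U, op U <-> (forall x, U x -> exists eps, 0 < eps /\
                                   forall y, d x y < eps -> U y).

Lemma d_pos x y : 0 <= d x y. Proof. apply Hd. Qed.
Lemma d_refl x : d x x = 0. Proof. apply Hd; auto. Qed.
Lemma d_sym x y : d x y = d y x. Proof. apply Hd. Qed.
Lemma d_tri x y z : d x z <= d x y + d y z. Proof. apply Hd. Qed.

Definition ball x r : set X := fun y => d x y < r.

Lemma ball_open x r : op (ball x r).
Proof.
  apply Hdt. intros y Hy. exists (r - d x y). split; [unfold ball in Hy; lra|].
  intros z Hz. unfold ball. pose proof (d_tri x y z). lra.
Qed.

Lemma ball_center x r : 0 < r -> ball x r x.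
Proof. intro; unfold ball; rewrite d_refl; auto. Qed.

Lemma nbhd_ball O x : nbhd X op O x -> exists eps, 0 < eps /\ sub X (ball x eps) O.
Proof.
  intros [U [HU [Ux HUO]]]. destruct (proj1 (Hdt U) HU x Ux) as [eps [He Hb]].
  exists eps; split; auto. intros y Hy; apply HUO, Hb, Hy.
Qed.

Lemma metric_hausdorff : hausdorff X op.
Proof.
  intros x y Hxy.
  assert (Hpos : 0 < d x y).
  { assert (d x y <> 0) by (intro H0; apply Hxy, Hd; auto).
    pose proof (d_pos x y); lra. }
  exists (ball x (d x y / 2)), (ball y (d x y / 2)).
  split; [apply ball_open|]. split; [apply ball_open|].
  split; [apply ball_center; lra|]. split; [apply ball_center; lra|].
  intros z Hx Hy. unfold ball in *. pose proof (d_tri x z y). rewrite (d_sym y z) in *. lra.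
Qed.

Lemma metric_regular : regular X op.
Proof.
  split; [apply metric_hausdorff|]. intros x U HU Ux.
  destruct (proj1 (Hdt U) HU x Ux) as [eps [He Hb]].
  exists (ball x (eps / 2)). split; [apply ball_open|]. split; [apply ball_center; lra|].
  intros y Hy. apply Hb.
  destruct (Hy (ball y (eps / 2))) as [w [H1 H2]].
  { apply nbhd_open; [apply ball_open | apply ball_center; lra]. }
  unfold ball in *. pose proof (d_tri x w y). rewrite (d_sym w y) in *. lra.
Qed.

Lemma metric_point_cosmic : point_cosmic X op.
Proof.
  split; [apply metric_regular|]. intro x.
  exists (fun N => exists n, ball x (pw n) = N). split.
  { exists (fun n => ball x (pw n)). intros N [n Hn]; eauto. }
  intros O HO. destruct (nbhd_ball O x HO) as [eps [He Hb]].
  destruct (pw_small eps He) as [n Hn].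
  apply nbhd_mono with (ball x (pw n)).
  - apply nbhd_open; [apply ball_open | apply ball_center, pw_pos].
  - intros y Hy. exists (ball x (pw n)). split; [eauto|]. split; auto.
    intros z Hz. apply Hb. unfold ball in *; lra.
Qed.

Section SigmaDiscrete.
Variable x0 : X.

Definition pick_outside (A : set X) : X := epsilon (inhabits x0) (fun x => ~ A x).

Lemma pick_outside_spec A : (exists x, ~ A x) -> ~ A (pick_outside A).
Proof. apply (epsilon_spec (inhabits x0) (fun x => ~ A x)). Qed.

(* Viewing the tower as a well-ordering, far_part r z is the initial segment
   of points preceding the first point at distance < r from z, and
   first_near r z is that first point. *)
Definition far_part r z : set X :=
  fun x => exists A, (tower X pick_outside A /\ forall y, A y -> r <= d z y) /\ A x.

Definition first_near r z : X := pick_outside (far_part r z).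

Lemma far_part_tower r z : tower X pick_outside (far_part r z).
Proof. apply tower_union. intros A [HA _]; auto. Qed.

Lemma far_part_far r z y : far_part r z y -> r <= d z y.
Proof. intros [A [[_ H] Ay]]; auto. Qed.

Lemma first_near_close r z : 0 < r -> d z (first_near r z) < r.
Proof.
  intro Hr. apply Rnot_le_lt; intro Hle.
  assert (Hn : ~ far_part r z (first_near r z)).
  { apply pick_outside_spec. exists z. intro Hz. apply far_part_far in Hz.
    rewrite d_refl in Hz. lra. }
  apply Hn. exists (succ_set X pick_outside (far_part r z)). split; [split|].
  - apply tower_succ, far_part_tower.
  - intros y [Hy | ->]; [apply far_part_far; auto | auto].
  - right; auto.
Qed.

Definition cell r dl x : set X := fun z => first_near r z = x /\ d z x < r - dl.

(* Points of different cells (same r, dl) are at distance at least dl: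
   the initial segments far_part r z and far_part r w are comparable. *)
Lemma cell_separated r dl x1 x2 z w : 0 < dl ->
  cell r dl x1 z -> cell r dl x2 w -> d z w < dl -> x1 = x2.
Proof.
  intros Hdl [H1 C1] [H2 C2] Hzw.
  destruct (tower_compare X pick_outside _ _ (far_part_tower r z) (far_part_tower r w))
    as [Hs | Hs].
  - destruct (tower_compare X pick_outside _ _ (far_part_tower r w) (far_part_tower r z))
      as [Hs' | Hs'].
    + assert (Heq : far_part r z = far_part r w) by (apply set_ext; split; auto).
      subst x1 x2. unfold first_near. rewrite Heq; auto.
    + exfalso. assert (Hf : far_part r z x2) by (apply Hs'; right; auto).
      apply far_part_far in Hf. pose proof (d_tri z w x2). lra.
  - exfalso. assert (Hf : far_part r w x1) by (apply Hs; right; auto).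
    apply far_part_far in Hf. pose proof (d_tri w z x1). rewrite (d_sym w z) in *. lra.
Qed.

Definition cells (m k : nat) : set X -> Prop :=
  fun N => exists x, N = cell (pw m) (pw k) x.

Lemma cells_discrete m k : discrete_family X op (cells m k).
Proof.
  intro p. exists (ball p (pw k / 2)). split.
  { apply nbhd_open; [apply ball_open | apply ball_center; pose proof (pw_pos k); lra]. }
  intros A B [x1 ->] [x2 ->] [z [Oz Az1]] [w [Ow Bw]].
  assert (x1 = x2); [|subst; tauto].
  apply (cell_separated (pw m) (pw k) x1 x2 z w); [apply pw_pos | auto | auto |].
  unfold ball in *. pose proof (d_tri z p w). rewrite (d_sym z p) in *. lra.
Qed.

(* The cells, indexed by pairs (m, k) enumerated via Cantor pairing, form a
   sigma-discrete network: a point y lies in the cell of its first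
   pw m-near point, which has small diameter. *)
Lemma metric_sigma_space : sigma_space X op.
Proof.
  split; [apply metric_regular|].
  exists (fun n => cells (fst (Cantor.of_nat n)) (snd (Cantor.of_nat n))).
  split; [intro; apply cells_discrete|].
  intros p O HO. destruct (nbhd_ball O p HO) as [eps [He Hb]].
  destruct (pw_small (eps / 4)) as [m Hm]; [lra|].
  pose proof (pw_pos m).
  apply nbhd_mono with (ball p (eps / 2)).
  { apply nbhd_open; [apply ball_open | apply ball_center; lra]. }
  intros y Hy.
  pose proof (first_near_close (pw m) y (pw_pos m)) as Hc.
  destruct (pw_small (pw m - d y (first_near (pw m) y))) as [k Hk]; [lra|].
  exists (cell (pw m) (pw k) (first_near (pw m) y)). split; [|split].
  - exists (Cantor.to_nat (m, k)). rewrite Cantor.cancel_of_to. simpl.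
    exists (first_near (pw m) y); auto.
  - intros z [Hz1 Hz2]. apply Hb. unfold ball in *.
    pose proof (d_tri p y z). pose proof (d_tri y (first_near (pw m) y) z).
    rewrite (d_sym (first_near (pw m) y) z) in *. pose proof (pw_pos k). lra.
  - split; auto. lra.
Qed.

End SigmaDiscrete.
End Metric.

Theorem theorem2 (X : Type) (op : set X -> Prop)
  (mul : X -> X -> X) (inv : X -> X) (e : X) :
  topological_group X op mul inv e -> baire X op ->
  (metrizable X op <-> point_cosmic X op) /\
  (point_cosmic X op <-> sigma_space X op).
Proof.
  intros HG HB.
  pose proof (G_top X op mul inv e HG) as Htop.
  assert (M2P : metrizable X op -> point_cosmic X op)
    by (intros [d [Hd Hdt]]; apply (metric_point_cosmic X op d); auto).
  assert (M2S : metrizable X op -> sigma_space X op)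
    by (intros [d [Hd Hdt]]; apply (metric_sigma_space X op d); auto).
  assert (P2M : point_cosmic X op -> metrizable X op).
  { intros [Hreg Hpc]. destruct (Hpc e) as [F [HF Hnet]].
    destruct (countable_network_pi_base X op Htop HB F e HF Hnet) as [H HH].
    apply (first_countable_metrizable X op mul inv e HG).
    apply (first_countable_of_pi_base X op mul inv e HG H e); auto. }
  assert (S2M : sigma_space X op -> metrizable X op).
  { intros [Hreg [D [Hdisc Hnet]]].
    destruct (sigma_discrete_network_pi_base X op Htop HB D e Hdisc Hnet) as [x [H HH]].
    apply (first_countable_metrizable X op mul inv e HG).
    apply (first_countable_of_pi_base X op mul inv e HG H x); auto. }
  tauto.
Qed.
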